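(* Let $W$ be a graded CLSAS on $\mathcal{W}$, regarded as a $\mathcal{W}$-module via left multiplication. Then $W$ is not isomorphic to $A_\gamma$ for any $\gamma\in\mathbb{C}$.
   Context: $G$ is a free (additive) subgroup of $\mathbb{C}$ of rank $\nu>1$. The high rank Witt algebra $\mathcal{W}$ has basis $\{L_a\mid a\in G\}$ and bracket $[L_a,L_b]=(b-a)L_{a+b}$. A left-symmetric algebra is a complex vector space with bilinear product satisfying $(xy)z-x(yz)=(yx)z-y(xz)$; a compatible left-symmetric algebraic structure (CLSAS) on a Lie algebra $\mathfrak g$ is such a product on $\mathfrak g$ with $xy-yx=[x,y]$. A CLSAS on $\mathcal{W}$ is graded if $L_aL_b=f(a,b)L_{a+b}$ for some function $f:G\times G\to\mathbb{C}$. The $\mathcal{W}$-module $A_\gamma$ ($\gamma\in\mathbb{C}$) has basis $\{v_b\mid b\in G\}$ and action $L_av_b=(a+b)v_{a+b}$ if $b\neq0$, $L_av_0=a(\gamma+a)v_a$. *)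

(* The complex field C is modelled by an arbitrary
   numClosedFieldType. *)
From HB Require Import structures.
From mathcomp Require Import all_boot all_order all_algebra.
Set Implicit Arguments. Unset Strict Implicit. Unset Printing Implicit Defensive.
Import Order.TTheory GRing.Theory Num.Theory.
Local Open Scope ring_scope.

Section Defs.
Variable C : numClosedFieldType.

Definition inG (n : nat) (e : 'I_n -> C) (x : C) : Prop :=
  exists k : 'I_n -> int, x = \sum_(i < n) e i *~ k i.

Definition Zfree (n : nat) (e : 'I_n -> C) : Prop :=
  forall k : 'I_n -> int, \sum_(i < n) e i *~ k i = 0 -> forall i, k i = 0.

(* A graded CLSAS on W: L_a L_b = f(a,b) L_{a+b}, with
   L_a L_b - L_b L_a = (b - a) L_{a+b} and left-symmetry on basis elements. *)
Definition graded_CLSAS (G : C -> Prop) (f : C -> C -> C) : Prop :=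
  (forall a b, G a -> G b -> f a b - f b a = b - a) /\
  (forall a b c, G a -> G b -> G c ->
     f a b * f (a + b) c - f b c * f a (b + c)
     = f b a * f (b + a) c - f a c * f b (a + c)).

(* Vectors of a space with basis indexed by G: finitely supported coefficient
   functions C -> C vanishing outside G. *)
Definition fsupp (G : C -> Prop) (u : C -> C) : Prop :=
  (exists s : seq C, forall x, u x != 0 -> x \in s) /\
  (forall x, u x != 0 -> G x).

(* Action of L_a on a module with basis {w_b} and L_a w_b = rho a b w_{a+b}. *)
Definition shift_act (rho : C -> C -> C) (a : C) (u : C -> C) : C -> C :=
  fun x => rho a (x - a) * u (x - a).

Definition rhoA (gamma : C) (a b : C) : C :=
  if b == 0 then a * (gamma + a) else a + b.

Definition module_iso (G : C -> Prop) (rho1 rho2 : C -> C -> C) : Prop :=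
  exists phi : (C -> C) -> (C -> C),
    [/\ (forall u, fsupp G u -> fsupp G (phi u)),
        (forall (k : C) u v, fsupp G u -> fsupp G v ->
           phi (fun x => k * u x + v x) = (fun x => k * phi u x + phi v x)),
        (forall u v, fsupp G u -> fsupp G v -> phi u = phi v -> u = v),
        (forall w, fsupp G w -> exists2 u, fsupp G u & phi u = w) &
        (forall a u, G a -> fsupp G u ->
           phi (shift_act rho1 a u) = shift_act rho2 a (phi u))].
End Defs.

From HB Require Import structures.
From mathcomp Require Import all_boot all_order all_algebra.
From Stdlib Require Import FunctionalExtensionality.
Import Order.TTheory GRing.Theory Num.Theory.
Set Implicit Arguments. Unset Strict Implicit.
Local Open Scope ring_scope.

(* Every basis element L_c of a graded CLSAS is a product L_a L_b with
   f(a,b) != 0: split c = a + b with a != b, and f(a,b) - f(b,a) = b - a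
   forces one of the two orders to work.  So left multiplication makes W
   equal to W.W.  In A_gamma, on the contrary, no L_a v_b has a component
   along v_0: that would need b = -a, and then the coefficient a + b, resp.
   a(gamma + a) with a = 0, vanishes.  Hence the v_0-coordinate of a module
   isomorphism W -> A_gamma is zero on W.W = W, contradicting surjectivity. *)

Section FinitelySupported.
Variable C : numClosedFieldType.
Implicit Types (G : C -> Prop) (u v : C -> C).

Definition single (b k : C) : C -> C := fun x => if x == b then k else 0.

Lemma fsupp_single G b k : G b -> fsupp G (single b k).
Proof.
move=> Gb; split.
  by exists [:: b] => x; rewrite /single inE; case: (x == b); rewrite ?eqxx.
by move=> x; rewrite /single; case: (eqVneq x b) => [-> _ //|_]; rewrite eqxx.
Qed.

Lemma shift_act_single (rho : C -> C -> C) a b k :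
  shift_act rho a (single b k) = single (a + b) (rho a b * k).
Proof.
apply: functional_extensionality => x; rewrite /shift_act /single.
case: (eqVneq x (a + b)) => [->|ne]; first by rewrite addrC addKr eqxx mulrC.
by rewrite subr_eq (addrC b) (negbTE ne) mulr0.
Qed.

Lemma linear_eq0_on_fsupp G (L : (C -> C) -> C) :
  (forall (k : C) u v, fsupp G u -> fsupp G v ->
     L (fun x => k * u x + v x) = k * L u + L v) ->
  (forall c k, G c -> L (single c k) = 0) ->
  forall u, fsupp G u -> L u = 0.
Proof.
move=> Llin Lsingle u [[s]]; elim: s u => [|c s IHs] u supp_u Gu.
  have fu : fsupp G u by split=> //; exists [::].
  have u_double : (fun x => 1 * u x + u x) = u.
    apply: functional_extensionality => x.
    by case: (eqVneq (u x) 0) => [->|/supp_u //]; rewrite mulr0 addr0.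
  have := Llin 1 u u fu fu; rewrite u_double mul1r.
  by move=> /(congr1 (fun y => y - L u)); rewrite subrr addrK.
pose u' x := if x == c then 0 else u x.
have supp_u' x : u' x != 0 -> x \in s.
  rewrite /u'; case: (eqVneq x c) => [_|ncx ux]; first by rewrite eqxx.
  by move: (supp_u x ux); rewrite in_cons (negbTE ncx).
have Gu' x : u' x != 0 -> G x.
  by rewrite /u'; case: (eqVneq x c) => [_|_ /Gu //]; rewrite eqxx.
have fu' : fsupp G u' by split=> //; exists s.
have [uc0|/Gu Gc] := eqVneq (u c) 0.
  have -> : u = u'.
    apply: functional_extensionality => x; rewrite /u'.
    by case: (eqVneq x c) => [->|].
  exact: IHs.
have u_split : (fun x => 1 * single c (u c) x + u' x) = u.
  apply: functional_extensionality => x; rewrite /single /u' mul1r.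
  by case: (eqVneq x c) => [->|_]; rewrite ?addr0 ?add0r.
rewrite -u_split Llin ?Lsingle ?mulr0 ?add0r ?IHs //; exact: fsupp_single.
Qed.

End FinitelySupported.

Section Intertwiner.
Variables (C : numClosedFieldType) (G : C -> Prop) (f rho : C -> C -> C).
Variable phi : (C -> C) -> (C -> C).

Hypothesis f_spans : forall c, G c ->
  exists a b, [/\ G a, G b, a + b = c & f a b != 0].
Hypothesis rho_opp : forall a, rho a (- a) = 0.
Hypothesis phi_linear : forall (k : C) u v, fsupp G u -> fsupp G v ->
  phi (fun x => k * u x + v x) = (fun x => k * phi u x + phi v x).
Hypothesis phi_shift : forall a u, G a -> fsupp G u ->
  phi (shift_act f a u) = shift_act rho a (phi u).

Lemma intertwiner_eq0_at0 u : fsupp G u -> phi u 0 = 0.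
Proof.
apply: (linear_eq0_on_fsupp (L := fun w => phi w 0)) => [k v w fv fw|c k Gc].
  by rewrite phi_linear.
have [a [b [Ga Gb <- fab]]] := f_spans Gc.
have -> : single (a + b) k = shift_act f a (single b (k / f a b)).
  by rewrite shift_act_single mulrC divfK.
rewrite phi_shift //; last exact: fsupp_single.
by rewrite /shift_act /= sub0r rho_opp mul0r.
Qed.

End Intertwiner.

Lemma graded_product_neq0 (C : numClosedFieldType) (G : C -> Prop)
    (f : C -> C -> C) :
  (forall a b, G a -> G b -> f a b - f b a = b - a) ->
  forall a b, G a -> G b -> a != b ->
  exists a' b', [/\ G a', G b', a' + b' = a + b & f a' b' != 0].
Proof.
move=> f_anti a b Ga Gb neq_ab.
have [fab0|fab] := eqVneq (f a b) 0; last by exists a, b.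
exists b, a; split=> //; first exact: addrC.
apply/eqP => fba0; move: (f_anti a b Ga Gb); rewrite fab0 fba0 subrr.
by move=> /esym/eqP; rewrite subr_eq0 eq_sym (negbTE neq_ab).
Qed.

Lemma rhoA_opp (C : numClosedFieldType) (gamma a : C) : rhoA gamma a (- a) = 0.
Proof.
by rewrite /rhoA oppr_eq0; case: eqP => [->|_]; rewrite ?mul0r ?addrN.
Qed.

Section FreeSubgroup.
Variables (C : numClosedFieldType) (n : nat) (e : 'I_n -> C).

Lemma sum_indicator i : \sum_(j < n) e j *~ (j == i)%:Z = e i.
Proof.
rewrite (bigD1 i) //= eqxx mulr1z big1 ?addr0 // => j /negbTE ->.
by rewrite mulr0z.
Qed.

Lemma inG0 : inG e 0.
Proof. by exists (fun _ => 0); rewrite big1 // => i _; rewrite mulr0z. Qed.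

Lemma inGN x : inG e x -> inG e (- x).
Proof.
case=> k ->; exists (fun i => - k i); rewrite -sumrN.
by apply: eq_bigr => i _; rewrite mulrNz.
Qed.

Lemma inG_gen i : inG e (e i).
Proof. by exists (fun j => (j == i)%:Z); rewrite sum_indicator. Qed.

Lemma Zfree_gen_neq0 i : Zfree e -> e i != 0.
Proof.
move=> free_e; apply/eqP => ei0.
have := free_e (fun j => (j == i)%:Z); rewrite sum_indicator.
by move=> /(_ ei0 i); rewrite eqxx.
Qed.

(* Splitting 0 as e_i + (- e_i) needs e_i != - e_i, i.e. characteristic 0. *)
Lemma inG_split_distinct : (0 < n)%N -> Zfree e ->
  forall c, inG e c -> exists a b, [/\ inG e a, inG e b, a + b = c & a != b].
Proof.
move=> n_gt0 free_e c Gc; have [->|c_neq0] := eqVneq c 0; last first.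
  by exists 0, c; rewrite add0r eq_sym; split=> //; exact: inG0.
pose i := Ordinal n_gt0.
exists (e i), (- e i); split; [exact: inG_gen | exact/inGN/inG_gen | exact: addrN |].
rewrite -subr_eq0 opprK -mulr2n mulrn_eq0 negb_or /=.
exact: Zfree_gen_neq0.
Qed.

End FreeSubgroup.

Theorem theorem3p3 (C : numClosedFieldType) (n : nat) (e : 'I_n -> C) :
  (1 < n)%N -> Zfree e ->
  forall f : C -> C -> C, graded_CLSAS (inG e) f ->
  forall gamma : C, ~ module_iso (inG e) f (rhoA gamma).
Proof.
move=> n_gt1 free_e f [f_anti _] gamma [phi [_ phi_linear _ phi_onto phi_shift]].
have f_spans c : inG e c ->
    exists a b, [/\ inG e a, inG e b, a + b = c & f a b != 0].
  move=> Gc; have [a [b [Ga Gb <- neq_ab]]] :=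
    inG_split_distinct (ltnW n_gt1) free_e Gc.
  exact: graded_product_neq0.
have [u fu phi_u] := phi_onto _ (fsupp_single 1 (inG0 e)).
have := intertwiner_eq0_at0 f_spans (@rhoA_opp _ gamma) phi_linear phi_shift fu.
by rewrite phi_u /single eqxx => /eqP; rewrite oner_eq0.
Qed.
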